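(* Let $[1,2,\dots,k]$ be a hierarchical-leadership flock and let $(x(t),v(t))$, $x_i,v_i\in\mathbb{R}^3$, solve for $t\ge0$ the Cucker–Smale system \[\dot x_i=v_i,\qquad \dot v_i=\sum_{j\in\mathcal{L}(i)}a_{ij}(x)(v_j-v_i),\qquad i=1,\dots,k,\] with $a_{ij}(x)=H/(1+|x_j-x_i|^2)^{\beta}$ for $j\in\mathcal{L}(i)$, where $H>0$ and $0<\beta<1/2$. Then there exists $B>0$, depending only on the initial configuration and the system parameters, such that \[\max_{1\le i,j\le k}|v_i(t)-v_j(t)|=O(e^{-Bt}),\qquad t>0.\]
   Context: A flock $[1,\dots,k]$ is under hierarchical leadership if $j\in\mathcal{L}(i)$ (agent $i$ is led by agent $j$) only if $j<i$, and every agent $i>1$ has a nonempty leader set $\mathcal{L}(i)$; agent $1$ has no leaders. *)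

From HB Require Import structures.
From mathcomp Require Import all_boot all_order all_algebra.
From mathcomp Require Import all_classical all_reals all_analysis.
Set Implicit Arguments. Unset Strict Implicit. Unset Printing Implicit Defensive.
Import Order.TTheory GRing.Theory Num.Theory.
Import numFieldNormedType.Exports.
Local Open Scope ring_scope.

(* Euclidean norm on R^3 (the library norm on 'rV is the max norm). *)
Definition enorm {R : realType} (u : 'rV[R]_3) : R :=
  Num.sqrt (\sum_(c < 3) (u ord0 c) ^+ 2).

(* Hierarchical leadership for agents 'I_k (agent i here = agent i+1 of the paper):
   leaders have strictly smaller index, every agent other than the first has a leader. *)
Definition hierarchical (k : nat) (L : 'I_k -> {set 'I_k}) : Prop :=
  (forall i j : 'I_k, j \in L i -> (j < i)%N) /\
  (forall i : 'I_k, (0 < i)%N -> L i != finset.set0).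

Definition cs_weight {R : realType} (H beta : R) (xi xj : 'rV[R]_3) : R :=
  H / (powR (1 + enorm (xj - xi) ^+ 2) beta).

From HB Require Import structures.
From mathcomp Require Import all_boot all_order all_algebra.
From mathcomp Require Import all_classical all_reals all_analysis.
From mathcomp Require Import ring lra.
Import Order.TTheory GRing.Theory Num.Theory.
Import numFieldNormedType.Exports.
Local Open Scope ring_scope.
Local Open Scope classical_set_scope.

(* Induction along the hierarchy.  Agent 1 has no leader, so its velocity is
   constant.  Let agent i follow leaders that already align exponentially with
   agent 1 and stay at bounded distance from it.  Then w = v_i - v_1 satisfies
   w' = -A w + f with f exponentially small and damping
   A >= H (K + |x_i - x_1|)^(-2 beta).  Set g = 1 - 2 beta > 0.  The functional
   |w| + H/g (K + |x_i - x_1|)^g is nonincreasing up to an integrable error, so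
   x_i - x_1 stays bounded; this is the step that needs beta < 1/2.  Then A is
   bounded below, and a Gronwall argument makes w decay exponentially.  To be
   differentiable, the norms are replaced by the componentwise smoothings
   sqrt (w_c^2 + e^(-2Bt)) and sqrt ((x_i - x_1)_c^2 + 1). *)

Lemma ler_term_sum {R : numDomainType} {I : finType} {P : pred I} {F : I -> R} (i : I) :
  P i -> (forall j, P j -> 0 <= F j) -> F i <= \sum_(j | P j) F j.
Proof. by move=> Pi F_ge0; rewrite (bigD1 i) //= lerDl sumr_ge0 // => j /andP[/F_ge0]. Qed.

Section RealCalculus.
Context {R : realType}.
Implicit Types (f g : R -> R) (a b t : R).
Local Notation cont_nonneg f := {within `[(0:R), +oo[, continuous f}.

Lemma within_continuous_cst (T : topologicalType) (A : set R) (c : T) :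
  {within A, continuous (fun _ : R => c)}.
Proof. exact/continuous_subspaceT/cst_continuous. Qed.

Lemma within_continuousM (A : set R) f g :
  {within A, continuous f} -> {within A, continuous g} ->
  {within A, continuous (fun s => f s * g s)}.
Proof. by move=> cf cg x; apply: cvgM; [exact: cf | exact: cg]. Qed.

Lemma within_continuous_sum (A : set R) n (F : 'I_n -> R -> R) :
  (forall c, {within A, continuous (F c)}) ->
  {within A, continuous (fun s => \sum_(c < n) F c s)}.
Proof.
move=> cF x; apply: cvg_big => // [[y z] /=|c _]; last exact: cF.
exact: add_continuous.
Qed.

Lemma is_derive_sum_fun n (F : 'I_n -> R -> R) (dF : 'I_n -> R) t :
  (forall c, is_derive t 1 (F c) (dF c)) ->
  is_derive t 1 (fun s => \sum_(c < n) F c s) (\sum_(c < n) dF c).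
Proof.
move=> dF_t; have -> : (fun s => \sum_(c < n) F c s) = \sum_(c < n) F c.
  by apply/funext => s; rewrite fct_sumE.
exact: is_derive_sum.
Qed.

Lemma is_derive_expR_lin a t :
  is_derive t 1 (fun s => expR (a * s)) (a * expR (a * t)).
Proof.
have := is_derive1_comp (is_derive_expR (a * t)) (is_deriveZ a (is_derive_id t 1)).
by rewrite mulrC /GRing.scale /= mulr1.
Qed.

Lemma is_derive_expR_decay b t :
  is_derive t 1 (fun s => expR (- (b * s))) (- b * expR (- (b * t))).
Proof.
have -> : (fun s => expR (- (b * s))) = (fun s => expR (- b * s)).
  by apply/funext => s; rewrite mulNr.
by rewrite -mulNr; exact: is_derive_expR_lin.
Qed.

Lemma is_derive1_continuous f t df : is_derive t 1 f df -> {for t, continuous f}.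
Proof. by case=> df_t _; apply/differentiable_continuous/derivable1_diffP. Qed.

Lemma ler_div_powR (H e Y Z : R) : 0 <= H -> 0 <= e -> 0 < Y -> Y <= Z ->
  H / powR Z e <= H / powR Y e.
Proof.
move=> H0 e0 Y0 YZ; apply: ler_wpM2l => //.
rewrite lef_pV2 ?posrE ?powR_gt0 ?(lt_le_trans Y0) //.
by apply: ge0_ler_powR => //; rewrite nnegrE ltW // (lt_le_trans Y0).
Qed.

Lemma le_powR_inv (g Y Z : R) : 0 < g -> 0 <= Y -> powR Y g <= Z -> Y <= powR Z g^-1.
Proof.
move=> g0 Y0 YZ; rewrite -[Y in Y <= _]powRr1 // -(mulfV (lt0r_neq0 g0)) powRrM.
apply: ge0_ler_powR => //; rewrite ?invr_ge0 ?ltW // nnegrE ?powR_ge0 //.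
exact: le_trans (powR_ge0 _ _) YZ.
Qed.

Lemma le_init_of_derive_le0 f :
  cont_nonneg f ->
  (forall t, 0 < t -> exists2 df, is_derive t 1 f df & df <= 0) ->
  forall t, 0 <= t -> f t <= f 0.
Proof.
move=> cf df t t0; apply: (@ler0_derive1_nincry R f 0) => // y.
- by rewrite in_itv /= andbT => /df [dfy [dy _] _].
- rewrite in_itv /= andbT => /df [dfy dy dfy_le].
  by rewrite derive1E; have [_ ->] := dy.
Qed.

End RealCalculus.

Definition smooth_abs {R : realType} (r w : R) : R := Num.sqrt (w ^+ 2 + r ^+ 2).

Section SmoothAbs.
Context {R : realType}.
Implicit Types (r w : R).

Lemma smooth_abs_gt0 r w : 0 < r -> 0 < smooth_abs r w.
Proof. by move=> r0; rewrite sqrtr_gt0 ltr_wpDl ?sqr_ge0 ?exprn_gt0. Qed.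

Lemma sqr_smooth_abs r w : smooth_abs r w ^+ 2 = w ^+ 2 + r ^+ 2.
Proof. by rewrite sqr_sqrtr // addr_ge0 ?sqr_ge0. Qed.

Lemma abs_le_smooth_abs r w : `|w| <= smooth_abs r w.
Proof. by rewrite -sqrtr_sqr ler_sqrt ?lerDl ?sqr_ge0 // addr_ge0 ?sqr_ge0. Qed.

Lemma le_smooth_abs r w : 0 <= r -> r <= smooth_abs r w.
Proof.
move=> r0; rewrite -[r in r <= _]ger0_norm // -sqrtr_sqr ler_sqrt.
  by rewrite lerDr sqr_ge0.
by rewrite addr_ge0 ?sqr_ge0.
Qed.

Lemma within_continuous_smooth_abs (A : set R) (r w : R -> R) :
  {within A, continuous r} -> {within A, continuous w} ->
  {within A, continuous (fun t => smooth_abs (r t) (w t))}.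
Proof.
move=> cr cw; have csqrt : {in (fun t => w t ^+ 2 + r t ^+ 2) @` A, continuous Num.sqrt}.
  by move=> y _; exact: sqrt_continuous.
have csum : {within A, continuous (fun t => w t ^+ 2 + r t ^+ 2)}.
  by apply: (within_continuousD (f := fun t => w t ^+ 2)); exact: within_continuousM.
exact: within_continuous_comp csqrt csum.
Qed.

Lemma is_derive_smooth_abs {r w : R -> R} {t dr dw : R} :
  is_derive t 1 r dr -> is_derive t 1 w dw -> 0 < r t ->
  is_derive t 1 (fun s => smooth_abs (r s) (w s))
    ((w t * dw + r t * dr) / smooth_abs (r t) (w t)).
Proof.
move=> dr_t dw_t r0.
have sq_t (h : R -> R) dh : is_derive t 1 h dh ->
    is_derive t 1 (fun s => h s ^+ 2) (2 * h t * dh).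
  move=> dh_t; apply: is_derive_eq (is_deriveM dh_t dh_t) _.
  by rewrite /GRing.scale /=; ring.
have dsum := is_deriveD (sq_t _ _ dw_t) (sq_t _ _ dr_t).
apply: is_derive_eq (is_derive1_comp (is_derive1_sqrt _) dsum) _.
  by rewrite ltr_wpDl ?sqr_ge0 ?exprn_gt0.
rewrite /smooth_abs; field.
by rewrite gt_eqF // -/(smooth_abs _ _) smooth_abs_gt0.
Qed.

Lemma smooth_abs_slope_le r w dw : 0 < r -> w * dw / smooth_abs r w <= `|dw|.
Proof.
move=> r0; have q0 : 0 < smooth_abs r w by exact: smooth_abs_gt0.
rewrite ler_pdivrMr // (le_trans (ler_norm _)) // normrM mulrC ler_wpM2l //.
exact: abs_le_smooth_abs.
Qed.

Lemma smooth_abs_damped_slope_le a b r w f : 0 < r -> 0 <= a -> 0 <= b ->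
  (w * (- a * w + f) + r * (- b * r)) / smooth_abs r w
    <= - a * smooth_abs r w + a * r + `|f|.
Proof.
move=> r0 a0 b0; set q := smooth_abs r w.
have q0 : 0 < q by exact: smooth_abs_gt0.
have q2 : q ^+ 2 = w ^+ 2 + r ^+ 2 := sqr_smooth_abs r w.
have wf : w * f <= q * `|f|.
  rewrite (le_trans (ler_norm _)) // normrM ler_wpM2r //; exact: abs_le_smooth_abs.
rewrite ler_pdivrMr //.
have : 0 <= a * r * (q - r) by rewrite !mulr_ge0 ?subr_ge0 ?le_smooth_abs // ltW.
have : 0 <= b * r ^+ 2 by rewrite mulr_ge0 ?sqr_ge0.
nra.
Qed.

End SmoothAbs.

Section Gronwall.
Context {R : realType}.
Implicit Types t : R.
Local Notation cont_nonneg f := {within `[(0:R), +oo[, continuous f}.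

Lemma exp_decay_of_derive_le (y A : R -> R) (a0 G B : R) :
  0 < a0 -> 0 < B -> 0 <= G -> cont_nonneg y ->
  (forall t, 0 < t -> 0 <= y t) -> (forall t, 0 < t -> a0 <= A t) ->
  (forall t, 0 < t -> exists2 dy, is_derive t 1 y dy &
     dy <= - A t * y t + G * expR (- (B * t))) ->
  exists2 lam, 0 < lam & exists C, forall t, 0 < t -> y t <= C * expR (- (lam * t)).
Proof.
move=> a0_gt0 B_gt0 G_ge0 cy y_ge0 a0_le dy.
pose lam := Num.min a0 B / 2.
have lam_gt0 : 0 < lam by rewrite divr_gt0 // lt_min a0_gt0 B_gt0.
have [lam_a0 lam_B] : lam <= a0 /\ lam * 2 <= B.
  have m_a0 : Num.min a0 B <= a0 by rewrite ge_min lexx.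
  have m_B : Num.min a0 B <= B by rewrite ge_min lexx orbT.
  by rewrite /lam; split; lra.
(* [lam <= A] absorbs the damping and [2 lam <= B] the forcing. *)
pose Y t := expR (lam * t) * y t + G / lam * expR (- (lam * t)).
have cY : cont_nonneg Y.
  apply: (within_continuousD (f := fun t => expR (lam * t) * y t)).
    apply/within_continuousM/cy/continuous_subspaceT => t.
    exact: is_derive1_continuous (is_derive_expR_lin lam t).
  apply/within_continuousM; first exact: within_continuous_cst.
  apply: continuous_subspaceT => t.
  exact: is_derive1_continuous (is_derive_expR_decay lam t).
have dY t : 0 < t -> exists2 dY, is_derive t 1 Y dY & dY <= 0.
  move=> t_gt0; have [dyt dyt_d dyt_le] := dy t t_gt0.
  set E := expR (lam * t); set E' := expR (- (lam * t)).
  exists (E * dyt + y t * (lam * E) + G / lam * (- lam * E')).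
    exact: is_deriveD (is_deriveM (is_derive_expR_lin lam t) dyt_d)
                      (is_deriveZ (G / lam) (is_derive_expR_decay lam t)).
  have E_gt0 : 0 < E by exact: expR_gt0.
  have decay_le : E * expR (- (B * t)) <= E'.
    by rewrite -expRD ler_expR; nra.
  have : 0 <= E * y t * (A t - lam).
    apply: mulr_ge0; first by rewrite mulr_ge0 ?y_ge0 // ltW.
    by rewrite subr_ge0 (le_trans lam_a0) ?a0_le.
  have : E * dyt <= E * (- A t * y t + G * expR (- (B * t))) by rewrite ler_pM2l.
  have : G * (E * expR (- (B * t))) <= G * E' by exact: ler_wpM2l.
  have -> : G / lam * (- lam * E') = - (G * E') by field; rewrite gt_eqF.
  nra.
have Y_le := le_init_of_derive_le0 _ cY dY.
exists lam => //; exists (Y 0) => t t_gt0.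
rewrite expRN ler_pdivlMr ?expR_gt0 // mulrC; apply: le_trans (Y_le t (ltW t_gt0)).
by rewrite /Y lerDl mulr_ge0 ?expR_ge0 // divr_ge0 // ltW.
Qed.

End Gronwall.

Section Lyapunov.
Context {R : realType}.
Implicit Types t : R.
Local Notation cont_nonneg f := {within `[(0:R), +oo[, continuous f}.

Variables (d s A : R -> R) (H e K G B : R).
Hypotheses (H_gt0 : 0 < H) (e_lt1 : e < 1) (K_gt0 : 0 < K) (B_gt0 : 0 < B) (G_ge0 : 0 <= G).
Hypotheses (cd : cont_nonneg d) (cs : cont_nonneg s).
Hypotheses (d_ge0 : forall t, 0 < t -> 0 <= d t) (s_ge0 : forall t, 0 <= s t).
Hypothesis d_derive : forall t, 0 < t -> exists2 dd, is_derive t 1 d dd &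
  dd <= - A t * d t + G * expR (- (B * t)).
Hypothesis s_derive : forall t, 0 < t -> exists2 ds, is_derive t 1 s ds & ds <= d t.
Hypothesis A_ge : forall t, 0 < t -> H / powR (K + s t) e <= A t.

Let g := 1 - e.
Let g_gt0 : 0 < g. Proof. by rewrite subr_gt0. Qed.
Let Ks_gt0 t : 0 < K + s t. Proof. by rewrite ltr_wpDr. Qed.

Let V t := d t + H / g * powR (K + s t) g + G / B * expR (- (B * t)).

Let cV : cont_nonneg V.
Proof.
apply: (within_continuousD (f := fun t => d t + H / g * powR (K + s t) g)).
  apply: (within_continuousD cd); apply/within_continuousM.
    exact: within_continuous_cst.
  have cpow : {in (fun t => K + s t) @` `[0, +oo[, continuous (fun y : R => powR y g)}.
    move=> _ /set_mem [t _ <-].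
    exact: is_derive1_continuous (is_derive1_powR g (Ks_gt0 t)).
  exact: within_continuous_comp cpow (within_continuousD (within_continuous_cst _ _ _) cs).
apply/within_continuousM; first exact: within_continuous_cst.
apply: continuous_subspaceT => t.
exact: is_derive1_continuous (is_derive_expR_decay B t).
Qed.

Let dV t : 0 < t -> exists2 dV, is_derive t 1 V dV & dV <= 0.
Proof.
move=> t_gt0; have [ddt ddt_d ddt_le] := d_derive t t_gt0.
have [dst dst_d dst_le] := s_derive t t_gt0.
set P := powR (K + s t) (- e).
exists (ddt + H * P * dst - G * expR (- (B * t))).
  have dV_t := is_deriveD (is_deriveD ddt_d (is_deriveZ (H / g)
      (is_derive1_comp (g := fun r => K + s r) (is_derive1_powR g (Ks_gt0 t))
         (is_deriveD (is_derive_cst K t 1) dst_d))))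
    (is_deriveZ (G / B) (is_derive_expR_decay B t)).
  apply: is_derive_eq dV_t _.
  rewrite /GRing.scale /= add0r /P (_ : g - 1 = - e); last by rewrite /g; ring.
  by field; rewrite !gt_eqF.
(* V' <= (H (K + s)^-e - A) d <= 0 *)
have HP_le : H * P <= A t by rewrite /P powRN; exact: A_ge.
have : H * P * dst <= H * P * d t.
  by rewrite ler_wpM2l // mulr_ge0 ?powR_ge0 // ltW.
have : H * P * d t <= A t * d t by rewrite ler_wpM2r ?d_ge0.
nra.
Qed.

Lemma bounded_of_lyapunov : exists S, forall t, 0 < t -> s t <= S.
Proof.
have V_le := le_init_of_derive_le0 _ cV dV.
exists (powR (V 0 * g / H) g^-1) => t t_gt0.
apply: (@le_trans _ _ (K + s t)); first by rewrite lerDr ltW.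
apply: (le_powR_inv _ _ _ g_gt0 (ltW (Ks_gt0 t))).
have VH_le : H / g * powR (K + s t) g <= V 0.
  apply: le_trans (V_le t (ltW t_gt0)).
  rewrite /V -addrA addrC -addrA lerDl addr_ge0 ?d_ge0 //.
  by rewrite mulr_ge0 ?expR_ge0 // divr_ge0 // ltW.
rewrite ler_pdivlMr // (_ : _ * H = H / g * powR (K + s t) g * g).
  by rewrite ler_pM2r.
by field; rewrite gt_eqF.
Qed.

End Lyapunov.

Section RelativeDynamics.
Context {R : realType}.
Implicit Types t : R.
Local Notation cont_nonneg f := {within `[(0:R), +oo[, continuous f}.

Variables (n : nat) (H e K M G B : R) (W X f : 'I_n -> R -> R) (A : R -> R).
Hypotheses (H_gt0 : 0 < H) (e_ge0 : 0 <= e) (e_lt1 : e < 1) (K_gt0 : 0 < K).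
Hypotheses (M_ge0 : 0 <= M) (G_ge0 : 0 <= G) (B_gt0 : 0 < B).
Hypothesis cW : forall c, cont_nonneg (W c).
Hypothesis cX : forall c, cont_nonneg (X c).
Hypothesis dX : forall c t, 0 < t -> is_derive t 1 (X c) (W c t).
Hypothesis dW : forall c t, 0 < t -> is_derive t 1 (W c) (- A t * W c t + f c t).
Hypothesis A_le : forall t, 0 < t -> A t <= M.
Hypothesis f_le : forall c t, 0 < t -> `|f c t| <= G * expR (- (B * t)).
Hypothesis A_ge : forall t, 0 < t -> H / powR (K + \sum_(c < n) `|X c t|) e <= A t.

Let rho t := expR (- (B * t)).
Let d t := \sum_(c < n) smooth_abs (rho t) (W c t).
Let s t := \sum_(c < n) smooth_abs 1 (X c t).

Let d_ge0 t : 0 <= d t.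
Proof. by apply: sumr_ge0 => c _; rewrite ltW ?smooth_abs_gt0 ?expR_gt0. Qed.

Let s_ge0 t : 0 <= s t.
Proof. by apply: sumr_ge0 => c _; rewrite ltW ?smooth_abs_gt0. Qed.

Let cd : cont_nonneg d.
Proof.
apply: within_continuous_sum => c; apply: within_continuous_smooth_abs => //.
by apply: continuous_subspaceT => t; exact: is_derive1_continuous (is_derive_expR_decay B t).
Qed.

Let cs : cont_nonneg s.
Proof.
apply: within_continuous_sum => c.
exact: within_continuous_smooth_abs (within_continuous_cst _ _ _) (cX c).
Qed.

Let speed_deviation_derive t : 0 < t -> exists2 dd, is_derive t 1 d dd &
  dd <= - A t * d t + (M + G) *+ n * rho t.
Proof.
move=> t_gt0; have A_ge0 : 0 <= A t.
  by apply: le_trans (A_ge t t_gt0); rewrite divr_ge0 ?powR_ge0 // ltW.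
exists (\sum_(c < n) (W c t * (- A t * W c t + f c t) + rho t * (- B * rho t))
                     / smooth_abs (rho t) (W c t)).
  apply: is_derive_sum_fun => c.
  exact: is_derive_smooth_abs (is_derive_expR_decay B t) (dW c t t_gt0) (expR_gt0 _).
rewrite /d mulr_sumr (_ : _ *+ n * _ = \sum_(c < n) (M + G) * rho t); last first.
  by rewrite sumr_const card_ord mulrnAl.
rewrite -big_split /=; apply: ler_sum => c _.
apply: le_trans (smooth_abs_damped_slope_le _ _ _ _ _ (expR_gt0 _) A_ge0 (ltW B_gt0)) _.
rewrite -addrA lerD2l mulrDl lerD ?f_le //.
by rewrite ler_wpM2r ?expR_ge0 ?A_le.
Qed.

Let position_deviation_derive t : 0 < t -> exists2 ds, is_derive t 1 s ds & ds <= d t.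
Proof.
move=> t_gt0; exists (\sum_(c < n) (X c t * W c t + 1 * 0) / smooth_abs 1 (X c t)).
  apply: is_derive_sum_fun => c.
  exact: is_derive_smooth_abs (is_derive_cst (1 : R) t 1) (dX c t t_gt0) ltr01.
apply: ler_sum => c _; rewrite mulr0 addr0.
exact: le_trans (smooth_abs_slope_le _ _ _ ltr01) (abs_le_smooth_abs _ _).
Qed.

Lemma relative_dynamics_decay : exists2 lam, 0 < lam & exists C D,
  forall t, 0 < t -> forall c, `|W c t| <= C * expR (- (lam * t)) /\ `|X c t| <= D.
Proof.
have MG_ge0 : 0 <= (M + G) *+ n by rewrite mulrn_wge0 ?addr_ge0.
have abs_le_s c t : `|X c t| <= s t.
  apply: le_trans (abs_le_smooth_abs 1 _) (ler_term_sum c _ _) => // j _.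
  by rewrite ltW ?smooth_abs_gt0.
have A_ge_s t : 0 < t -> H / powR (K + s t) e <= A t.
  move=> t_gt0; apply: le_trans (A_ge t t_gt0); apply: ler_div_powR => //; first exact: ltW.
    by rewrite ltr_wpDr ?sumr_ge0.
  by rewrite lerD2l; apply: ler_sum => c _; exact: abs_le_smooth_abs.
have [S s_le] := bounded_of_lyapunov _ _ _ _ _ _ _ _ H_gt0 e_lt1 K_gt0 B_gt0 MG_ge0 cd cs
  (fun t _ => d_ge0 t) s_ge0 speed_deviation_derive position_deviation_derive A_ge_s.
have KS_gt0 : 0 < K + S by rewrite ltr_wpDr // (le_trans (s_ge0 1)) ?s_le.
have a0_le t : 0 < t -> H / powR (K + S) e <= A t.
  move=> t_gt0; apply: le_trans (A_ge_s t t_gt0); apply: ler_div_powR => //.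
  - exact: ltW.
  - by rewrite ltr_wpDr.
  - by rewrite lerD2l s_le.
have [lam lam_gt0 [C d_le]] := exp_decay_of_derive_le _ _ _ _ _
  (divr_gt0 H_gt0 (powR_gt0 _ KS_gt0)) B_gt0 MG_ge0 cd (fun t _ => d_ge0 t) a0_le
  speed_deviation_derive.
exists lam => //; exists C, S => t t_gt0 c; split.
  apply: le_trans (d_le t t_gt0).
  apply: le_trans (abs_le_smooth_abs (rho t) _) (ler_term_sum c _ _) => // j _.
  by rewrite ltW ?smooth_abs_gt0 ?expR_gt0.
exact: le_trans (abs_le_s c t) (s_le t t_gt0).
Qed.

End RelativeDynamics.

Section Coordinates.
Context {R : realType}.

Lemma sum_sqr_le_sqr_sum n (z : 'I_n -> R) : (forall i, 0 <= z i) ->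
  \sum_(i < n) z i ^+ 2 <= (\sum_(i < n) z i) ^+ 2.
Proof.
move=> z_ge0; rewrite [X in _ <= X]expr2 mulr_suml; apply: ler_sum => i _.
by rewrite expr2 ler_wpM2l // ler_term_sum.
Qed.

Lemma enorm_le_sum_abs (u : 'rV[R]_3) : enorm u <= \sum_(c < 3) `|u ord0 c|.
Proof.
rewrite -[X in _ <= X]ger0_norm ?sumr_ge0 // -sqrtr_sqr ler_sqrt ?sqr_ge0 //.
rewrite (eq_bigr (fun c => `|u ord0 c| ^+ 2)) => [|c _]; last by rewrite real_normK ?num_real.
exact: sum_sqr_le_sqr_sum.
Qed.

Lemma within_continuous_coord m n (A : set R) (F : R -> 'M[R]_(m, n)) i j :
  {within A, continuous F} -> {within A, continuous (fun s => F s i j)}.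
Proof.
move=> cF; have cij : {in F @` A, continuous (fun M : 'M[R]_(m, n) => M i j)}.
  by move=> M _; exact: coord_continuous.
exact: within_continuous_comp cij cF.
Qed.

Lemma is_derive_coord m n (F : R -> 'M[R]_(m, n)) (t : R) (dF : 'M[R]_(m, n)) i j :
  is_derive t 1 F dF -> is_derive t 1 (fun s => F s i j) (dF i j).
Proof.
move=> [dF_t <-]; split; first by move/derivable_mxP : dF_t; apply.
by rewrite derive_mx // mxE.
Qed.

End Coordinates.

Section Weights.
Context {R : realType} {H beta : R}.
Hypotheses (H_gt0 : 0 < H) (beta_ge0 : 0 <= beta).

Lemma cs_weight_gt0 (xi xj : 'rV[R]_3) : 0 < cs_weight H beta xi xj.
Proof. by rewrite divr_gt0 // powR_gt0 // ltr_wpDr ?sqr_ge0. Qed.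

Lemma cs_weight_le (xi xj : 'rV[R]_3) : cs_weight H beta xi xj <= H.
Proof.
have a_ge1 : 1 <= 1 + enorm (xj - xi) ^+ 2 by rewrite lerDl sqr_ge0.
have p_ge1 : 1 <= powR (1 + enorm (xj - xi) ^+ 2) beta.
  by rewrite -[X in X <= _](powRr0 (1 + enorm (xj - xi) ^+ 2)); apply: ler_powR.
by rewrite /cs_weight ler_pdivrMr ?(lt_le_trans ltr01) // ler_peMr // ltW.
Qed.

Lemma cs_weight_ge (xi xj : 'rV[R]_3) (Y : R) : 0 <= Y -> enorm (xj - xi) <= Y ->
  H / powR (1 + Y) (2 * beta) <= cs_weight H beta xi xj.
Proof.
move=> Y_ge0 dist_le; rewrite /cs_weight powRrM powR_mulrn ?addr_ge0 //.
apply: ler_div_powR => //; first exact: ltW.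
  by rewrite ltr_wpDr ?sqr_ge0.
have : 0 <= enorm (xj - xi) by exact: sqrtr_ge0.
nra.
Qed.

End Weights.

Section HierarchicalFlock.
Context {R : realType} {k : nat} {L : 'I_k.+1 -> {set 'I_k.+1}} {H beta : R}.
Context {x v : 'I_k.+1 -> R -> 'rV[R]_3}.
Implicit Types t : R.
Hypothesis hL : hierarchical L.
Hypotheses (H_gt0 : 0 < H) (beta_gt0 : 0 < beta) (beta_lt : beta < 1 / 2).
Hypothesis cx : forall i, {within `[0, +oo[, continuous (x i)}.
Hypothesis cv : forall i, {within `[0, +oo[, continuous (v i)}.
Hypothesis dx : forall i t, 0 < t -> is_derive t 1 (x i) (v i t).
Hypothesis dv : forall i t, 0 < t ->
  is_derive t 1 (v i) (\sum_(j in L i) cs_weight H beta (x i t) (x j t) *: (v j t - v i t)).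

Definition relative_bound (i : 'I_k.+1) (B C D : R) : Prop :=
  forall t, 0 < t -> forall c, `|(v i t - v ord0 t) ord0 c| <= C * expR (- (B * t))
                            /\ `|(x i t - x ord0 t) ord0 c| <= D.

Lemma relative_bound0 B : relative_bound ord0 B 0 0.
Proof. by move=> t _ c; rewrite !subrr !mxE normr0 mul0r. Qed.

Lemma relative_bound_ge0 {i B C D} : relative_bound i B C D -> 0 <= C /\ 0 <= D.
Proof.
move=> /(_ 1 ltr01 ord0) [v_le x_le]; split; last exact: le_trans x_le.
by rewrite -(pmulr_lge0 _ (expR_gt0 (- (B * 1)))) (le_trans _ v_le).
Qed.

Lemma relative_bound_weaken i B C D B' C' D' : relative_bound i B C D ->
  B' <= B -> C <= C' -> D <= D' -> relative_bound i B' C' D'.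
Proof.
move=> bnd B'_le C_le D_le t t_gt0 c; have [C_ge0 _] := relative_bound_ge0 bnd.
have [v_le x_le] := bnd t t_gt0 c; split; last exact: le_trans x_le D_le.
apply: le_trans v_le _; apply: ler_pM; rewrite ?expR_ge0 //.
by rewrite ler_expR lerN2 ler_wpM2r // ltW.
Qed.

Let relative_velocity_derive i c t : 0 < t ->
  is_derive t 1 (fun s => (v i s - v ord0 s) ord0 c)
    (- (\sum_(j in L i) cs_weight H beta (x i t) (x j t)) * (v i t - v ord0 t) ord0 c
     + \sum_(j in L i) cs_weight H beta (x i t) (x j t) * (v j t - v ord0 t) ord0 c).
Proof.
move=> t_gt0; have no_leader0 : L ord0 =i pred0.
  by move=> j; apply/negbTE/negP => /hL.1; rewrite ltn0.
apply: is_derive_eq (is_derive_coord _ _ _ _ _ ord0 c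
  (is_deriveB (dv i t t_gt0) (dv ord0 t t_gt0))) _.
rewrite (eq_bigl _ _ no_leader0) big_pred0_eq subr0 summxE mulNr mulr_suml -sumrN.
rewrite -big_split /=; apply: eq_bigr => j _; rewrite !mxE; ring.
Qed.

Let leader_damping_ge i j0 D t : j0 \in L i -> 0 <= D ->
  (forall c, `|(x j0 t - x ord0 t) ord0 c| <= D) ->
  H / powR (1 + D *+ 3 + \sum_(c < 3) `|(x i t - x ord0 t) ord0 c|) (2 * beta)
    <= \sum_(j in L i) cs_weight H beta (x i t) (x j t).
Proof.
move=> j0_lead D_ge0 x_le.
apply: le_trans (ler_term_sum j0 j0_lead _) => [|j _]; last exact/ltW/(cs_weight_gt0 H_gt0).
rewrite -addrA; apply: (cs_weight_ge H_gt0 (ltW beta_gt0)).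
  by rewrite addr_ge0 ?mulrn_wge0 ?sumr_ge0.
apply: le_trans (enorm_le_sum_abs _) _.
rewrite (_ : D *+ 3 = \sum_(c < 3) D); last by rewrite sumr_const card_ord.
rewrite -big_split /=; apply: ler_sum => c _.
have -> : (x j0 t - x i t) ord0 c
          = (x j0 t - x ord0 t) ord0 c - (x i t - x ord0 t) ord0 c by rewrite !mxE; ring.
exact: le_trans (ler_normB _ _) (lerD (x_le c) (lexx _)).
Qed.

Lemma relative_bound_follower (i : 'I_k.+1) (B C D : R) : (0 < i)%N -> 0 < B ->
  (forall j, j \in L i -> relative_bound j B C D) ->
  exists2 B', 0 < B' & exists C' D', relative_bound i B' C' D'.
Proof.
move=> i_gt0 B_gt0 lead_bnd.
have [j0 j0_lead] : exists j0, j0 \in L i by apply/set0Pn; exact: hL.2.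
have [C_ge0 D_ge0] := relative_bound_ge0 (lead_bnd j0 j0_lead).
apply: (@relative_dynamics_decay R 3 H (2 * beta) (1 + D *+ 3) (H *+ #|L i|)
  (H * C *+ #|L i|) B (fun c t => (v i t - v ord0 t) ord0 c)
  (fun c t => (x i t - x ord0 t) ord0 c)
  (fun c t => \sum_(j in L i) cs_weight H beta (x i t) (x j t) * (v j t - v ord0 t) ord0 c)
  (fun t => \sum_(j in L i) cs_weight H beta (x i t) (x j t))) => //.
- by rewrite mulr_ge0 // ltW.
- by rewrite -ltr_pdivlMl // mulrC.
- by rewrite ltr_wpDr ?mulrn_wge0.
- by rewrite mulrn_wge0 // ltW.
- by rewrite mulrn_wge0 // mulr_ge0 // ltW.
- by move=> c; apply/within_continuous_coord/within_continuousB.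
- by move=> c; apply/within_continuous_coord/within_continuousB.
- by move=> c t t_gt0; exact: is_derive_coord (is_deriveB (dx i t t_gt0) (dx ord0 t t_gt0)).
- by move=> c t; exact: relative_velocity_derive.
- move=> t _; rewrite -sumr_const; apply: ler_sum => j _.
  exact: (cs_weight_le H_gt0 (ltW beta_gt0)).
- move=> c t t_gt0; apply: le_trans (ler_norm_sum _ _ _) _.
  rewrite mulrnAl -sumr_const; apply: ler_sum => j j_lead.
  have a_ge0 := ltW (cs_weight_gt0 H_gt0 (x i t) (x j t)).
  rewrite normrM ger0_norm // -mulrA.
  apply: ler_pM; rewrite ?normr_ge0 ?(cs_weight_le H_gt0 (ltW beta_gt0)) //.
  by case: (lead_bnd j j_lead t t_gt0 c).
- move=> t t_gt0; apply: (leader_damping_ge _ _ _ _ j0_lead D_ge0) => c.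
  by case: (lead_bnd j0 j0_lead t t_gt0 c).
Qed.

Definition bounded_upto (m : nat) : Prop :=
  exists2 B, 0 < B & exists C D, forall i : 'I_k.+1, (i < m)%N -> relative_bound i B C D.

Lemma bounded_uptoS m : (0 < m)%N -> (m < k.+1)%N -> bounded_upto m -> bounded_upto m.+1.
Proof.
move=> m_gt0 m_lt [B B_gt0 [C [D bnd]]].
have [B' B'_gt0 [C' [D' bnd']]] := relative_bound_follower (Ordinal m_lt) _ _ _ m_gt0 B_gt0
  (fun j j_lead => bnd j (hL.1 _ _ j_lead)).
exists (Num.min B B'); first by rewrite lt_min B_gt0.
exists (Num.max C C'), (Num.max D D') => i; rewrite ltnS leq_eqVlt => /predU1P[i_m | i_lt].
  have -> : i = Ordinal m_lt by exact: val_inj.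
  by apply: relative_bound_weaken bnd' _ _ _; rewrite ?ge_min ?le_max lexx ?orbT.
by apply: relative_bound_weaken (bnd i i_lt) _ _ _; rewrite ?ge_min ?le_max lexx ?orbT.
Qed.

Lemma bounded_upto_all : bounded_upto k.+1.
Proof.
suff : forall m, (m <= k)%N -> bounded_upto m.+1 by apply.
elim=> [_ | m IHm m_lt]; last exact: bounded_uptoS (IHm (ltnW m_lt)).
exists 1 => //; exists 0, 0 => i; rewrite ltnS leqn0 => /eqP i0.
by rewrite (_ : i = ord0); [exact: relative_bound0 | exact: val_inj].
Qed.

Lemma flock_velocity_decay : exists2 B, 0 < B & exists C, forall t, 0 < t ->
  forall i j, enorm (v i t - v j t) <= C * expR (- (B * t)).
Proof.
have [B B_gt0 [C [D bnd]]] := bounded_upto_all.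
exists B => //; exists (C *+ 6) => t t_gt0 i j.
apply: le_trans (enorm_le_sum_abs _) _.
set e := expR _; rewrite (_ : C *+ 6 * e = \sum_(c < 3) (C * e + C * e)); last first.
  by rewrite sumr_const card_ord -mulr2n -mulrnA mulrnAl.
apply: ler_sum => c _.
have -> : (v i t - v j t) ord0 c
          = (v i t - v ord0 t) ord0 c - (v j t - v ord0 t) ord0 c by rewrite !mxE; ring.
apply: le_trans (ler_normB _ _) (lerD _ _).
- by case: (bnd i (ltn_ord i) t t_gt0 c).
- by case: (bnd j (ltn_ord j) t t_gt0 c).
Qed.

End HierarchicalFlock.

Theorem theorem5 (R : realType) (k : nat) (L : 'I_k -> {set 'I_k})
  (H beta : R) (x v : 'I_k -> R -> 'rV[R]_3) :
  hierarchical L ->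
  0 < H -> 0 < beta -> beta < 1 / 2 ->
  (forall i, {within `[0, +oo[, continuous (x i)}) ->
  (forall i, {within `[0, +oo[, continuous (v i)}) ->
  (forall i (t : R), 0 < t -> is_derive t 1 (x i) (v i t)) ->
  (forall i (t : R), 0 < t ->
     is_derive t 1 (v i)
       (\sum_(j in L i) cs_weight H beta (x i t) (x j t) *: (v j t - v i t))) ->
  exists B : R, 0 < B /\
    exists C : R, forall t : R, 0 < t ->
      forall i j : 'I_k, enorm (v i t - v j t) <= C * expR (- (B * t)).
Proof.
case: k L x v => [|k] L x v hL H_gt0 beta_gt0 beta_lt cx cv dx dv.
  by exists 1; split => //; exists 0 => t _ [].
have [B B_gt0 [C decay]] := flock_velocity_decay hL H_gt0 beta_gt0 beta_lt cx cv dx dv.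
by exists B; split => //; exists C.
Qed.
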